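(* Let $\Delta$ be a pure simplicial complex of dimension $m-1\ge2$ whose clique decomposition $\Delta=\Delta_1\cup\cdots\cup\Delta_r$ satisfies conditions (i) and (ii), such that each clique is a single $(m-1)$-simplex and $G_\Delta$ is the complete graph $K_r$. Then $\Delta$ is closed if and only if $m\ge r$.
   Context: $\Delta$ is a pure $(m-1)$-dimensional simplicial complex on $[n]$. Clique decomposition: let $\mathcal{S}$ be the set of simplices $\Gamma$ with vertices in $[n]$, $\dim\Gamma\ge m-1$, whose $(m-1)$-skeleton is contained in $\Delta$; the maximal elements $\Gamma_1,\dots,\Gamma_r$ of $\mathcal{S}$ give the cliques $\Delta_i=\Gamma_i^{(m-1)}$, $\Delta=\Delta_1\cup\cdots\cup\Delta_r$; $V(\Delta_i)$ is the vertex set of $\Delta_i$. Conditions: (i) $|V(\Delta_i)\cap V(\Delta_j)|\le1$ for all $i<j$; (ii) $V(\Delta_i)\cap V(\Delta_j)\cap V(\Delta_k)=\emptyset$ for all $i<j<k$. $G_\Delta$ is the simple graph on vertices $v_1,\dots,v_r$ with an edge $\{v_i,v_j\}$ ($i\ne j$) iff $V(\Delta_i)\cap V(\Delta_j)\ne\emptyset$. $\Delta$ is closed with respect to a labeling of its vertices by $[n]$ if for any two facets $F=\{a_1<\dots<a_m\}$, $G=\{b_1<\dots<b_m\}$ with $a_i=b_i$ for some $i$, every $m$-subset of $F\cup G$ is a facet of $\Delta$; $\Delta$ is closed if some labeling makes it closed. *)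

From mathcomp Require Import all_boot all_fingroup.
Set Implicit Arguments. Unset Strict Implicit. Unset Printing Implicit Defensive.

(* A pure simplicial complex on [n] = {0,...,n-1} (vertices are 'I_n) is
   represented by its set of facets F : {set {set 'I_n}}; its faces are the
   subsets of facets. *)

Definition is_face n (F : {set {set 'I_n}}) (s : {set 'I_n}) : bool :=
  [exists f in F, s \subset f].

Definition pure_of_dim n (F : {set {set 'I_n}}) (m : nat) : bool :=
  (F != set0) && [forall f in F, #|f| == m].

(* Gamma belongs to the family S: dim Gamma >= m-1 and the (m-1)-skeleton of
   Gamma (all faces of Gamma with at most m vertices) is contained in Delta. *)
Definition in_S n (F : {set {set 'I_n}}) (m : nat) (G : {set 'I_n}) : bool :=
  (m <= #|G|) &&
  [forall s : {set 'I_n}, ((s \subset G) && (#|s| <= m)) ==> is_face F s].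

(* The maximal elements Gamma_1, ..., Gamma_r of S; the vertex set of the
   clique Delta_i = Gamma_i^(m-1) is Gamma_i itself. *)
Definition cliques n (F : {set {set 'I_n}}) (m : nat) : {set {set 'I_n}} :=
  [set G | in_S F m G &&
     [forall H : {set 'I_n}, (in_S F m H && (G \subset H)) ==> (H == G)]].

(* i-th smallest element (0-based) of a set of vertices. *)
Definition kth n (f : {set 'I_n}) (i : nat) : nat :=
  nth 0 (sort leq [seq val x | x <- enum f]) i.

(* Closedness with respect to the given labeling (the natural order on 'I_n). *)
Definition closed_wrt n (F : {set {set 'I_n}}) (m : nat) : Prop :=
  forall f g, f \in F -> g \in F ->
    (exists i, i < m /\ kth f i = kth g i) ->
    forall h : {set 'I_n}, h \subset f :|: g -> #|h| = m -> h \in F.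

Definition relabel n (s : {perm 'I_n}) (F : {set {set 'I_n}}) :
  {set {set 'I_n}} := [set (fun f : {set 'I_n} => [set s x | x in f]) f | f in F].

Definition is_closed n (F : {set {set 'I_n}}) (m : nat) : Prop :=
  exists s : {perm 'I_n}, closed_wrt (relabel s F) m.

From mathcomp Require Import all_boot all_fingroup zify.
Set Implicit Arguments. Unset Strict Implicit. Unset Printing Implicit Defensive.

(* Since every clique is a single simplex, the cliques are exactly the facets
   (cliques_facets), so the facets form a family of m-sets in which any two
   meet in exactly one vertex and no vertex lies in three facets.  For such a
   family F (section FacetsMeetingInOnePoint):
   - if |F| > m, the other facets meet a facet f in |F|-1 >= m distinct
     vertices, so every vertex is shared.  Under any labeling, the smallest
     vertex u is then the first vertex of two facets f, g; closedness would
     make b |: (f :\ a) a facet for a in f, b in g \ f, but it meets f in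
     m-1 >= 2 vertices (closed_distinct_kth, card_le_of_closed);
   - if |F| <= m, every facet has a private vertex.  Number the facets, and
     order the vertices by the highest-numbered facet containing them (higher
     first), private vertices before shared ones.  Then the common vertex v
     of facets f, g has different ranks in f and g (rank_separation), so no
     two distinct facets share their i-th vertex and the labeling is closed
     (closed_of_card_le). *)

Lemma count_lt_nth (s : seq nat) j : sorted ltn s -> j < size s ->
  count (fun a => a < nth 0 s j) s = j.
Proof.
elim: s j => [|a s IH] [|j] //= s_sorted.
  have /allP a_min := order_path_min ltn_trans s_sorted.
  rewrite ltnn add0n => _; apply/eqP; rewrite -leqn0 leqNgt -has_count.
  by apply/hasPn => b /a_min; rewrite -leqNgt => /ltnW.
have /allP a_min := order_path_min ltn_trans s_sorted.
move=> j_lt; rewrite (IH j (path_sorted s_sorted) j_lt).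
by rewrite (a_min _ (mem_nth 0 j_lt)).
Qed.

Definition rank_by n (c : 'I_n -> nat) (f : {set 'I_n}) (x : 'I_n) : nat :=
  #|[set y in f | c y < c x]|.

Lemma kth_sorted n (f : {set 'I_n}) :
  sorted ltn (sort leq [seq val x | x <- enum f]).
Proof.
rewrite ltn_sorted_uniq_leq sort_uniq (sort_sorted leq_total) andbT.
by rewrite map_inj_uniq ?enum_uniq //; exact: val_inj.
Qed.

Lemma rank_count n (f : {set 'I_n}) (x : 'I_n) :
  rank_by val f x = count (fun a => a < val x) (sort leq [seq val y | y <- enum f]).
Proof.
rewrite count_sort count_map /rank_by cardsE cardE -size_filter /enum_mem.
by rewrite -filter_predI; congr size; apply: eq_filter => y /=; rewrite andbC.
Qed.

Lemma kth_rank n (f : {set 'I_n}) x : x \in f -> kth f (rank_by val f x) = val x.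
Proof.
move=> xf; set s := sort leq [seq val y | y <- enum f].
have xs : val x \in s by rewrite mem_sort; apply: map_f; rewrite mem_enum.
rewrite rank_count -/s -{1}(nth_index 0 xs) count_lt_nth ?index_mem ?kth_sorted //.
exact: nth_index.
Qed.

Lemma kth_ex n (f : {set 'I_n}) i : i < #|f| ->
  exists2 x, x \in f & kth f i = val x /\ rank_by val f x = i.
Proof.
move=> i_lt; set s := sort leq [seq val x | x <- enum f].
have size_s : size s = #|f| by rewrite size_sort size_map cardE.
have : nth 0 s i \in s by rewrite mem_nth // size_s.
rewrite mem_sort => /mapP [y]; rewrite mem_enum => yf ys.
exists y => //; split; first by rewrite /kth -ys.
by rewrite rank_count -/s -ys count_lt_nth ?kth_sorted ?size_s.
Qed.

Lemma kth_common n (f g : {set 'I_n}) i : i < #|f| -> i < #|g| ->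
  kth f i = kth g i -> exists2 x, x \in f :&: g & rank_by val f x = rank_by val g x.
Proof.
move=> ltf ltg eq_kth.
have [x xf [kx rx]] := kth_ex ltf; have [y yg [ky ry]] := kth_ex ltg.
have exy : x = y by apply: val_inj; rewrite -kx -ky.
exists x; first by rewrite inE xf exy yg.
by rewrite rx exy ry.
Qed.

Lemma perm_of_code n (c : 'I_n -> nat) : injective c ->
  exists s : {perm 'I_n}, forall x y, (val (s x) < val (s y)) = (c x < c y).
Proof.
move=> c_inj; pose rk x := #|[set y | c y < c x]|.
have rk_lt x : rk x < n.
  rewrite -[n]card_ord -cardsT; apply: proper_card; apply/properP.
  by split; [exact: subsetT | exists x; rewrite ?inE ?ltnn].
have rk_mono x y : c x < c y -> rk x < rk y.
  move=> lt_xy; apply: proper_card; apply/properP; split.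
    by apply/subsetP => z; rewrite !inE => /ltn_trans; apply.
  by exists x; rewrite ?inE ?ltnn.
have rkE x y : (rk x < rk y) = (c x < c y).
  case: (ltngtP (c x) (c y)) => [/rk_mono //|/rk_mono lt_yx|/c_inj ->].
    by apply/negbTE; rewrite -leqNgt ltnW.
  by rewrite ltnn.
pose rko x : 'I_n := Ordinal (rk_lt x).
have rko_inj : injective rko.
  move=> x y /(congr1 val) /= eq_rk; apply: c_inj.
  by case: (ltngtP (c x) (c y)) => // /rk_mono; rewrite eq_rk ltnn.
by exists (perm rko_inj) => x y; rewrite !permE; exact: rkE.
Qed.

Lemma mem_relabel n (s : {perm 'I_n}) (F : {set {set 'I_n}}) (f : {set 'I_n}) :
  ([set s x | x in f] \in relabel s F) = (f \in F).
Proof.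
apply/imsetP/idP => [[g gF /(imset_inj (@perm_inj _ s)) -> //]|fF].
by exists f.
Qed.

Lemma rank_relabel n (s : {perm 'I_n}) (c : 'I_n -> nat) (f : {set 'I_n}) v :
  (forall x y, (val (s x) < val (s y)) = (c x < c y)) ->
  rank_by val [set s x | x in f] (s v) = rank_by c f v.
Proof.
move=> sP; rewrite /rank_by -[RHS](card_imset _ (@perm_inj _ s)).
congr #|pred_of_set _|; apply/setP => y; apply/idP/imsetP => [|[w]].
  by rewrite inE => /andP [/imsetP [w wf ->]]; rewrite sP => lt; exists w; rewrite // inE wf.
by rewrite inE => /andP [wf lt] ->; rewrite inE sP lt andbT imset_f.
Qed.

Section FacetsMeetingInOnePoint.

Variables (n m : nat) (F : {set {set 'I_n}}).
Hypothesis card_facet : forall f, f \in F -> #|f| = m.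
Hypothesis meet1 : forall f g, f \in F -> g \in F -> f != g -> #|f :&: g| = 1.
Hypothesis no_triple : forall f g h, f \in F -> g \in F -> h \in F ->
  f != g -> f != h -> g != h -> f :&: g :&: h = set0.

Lemma meet_uniq f g x y : f \in F -> g \in F -> f != g ->
  x \in f -> x \in g -> y \in f -> y \in g -> x = y.
Proof.
move=> fF gF fg xf xg yf yg; have /eqP/cards1P [z fgz] := meet1 fF gF fg.
have : x \in f :&: g by rewrite inE xf xg.
have : y \in f :&: g by rewrite inE yf yg.
by rewrite fgz !inE => /eqP -> /eqP ->.
Qed.

Lemma at_most_two f g h x : f \in F -> g \in F -> h \in F -> f != g ->
  x \in f -> x \in g -> x \in h -> (h == f) || (h == g).
Proof.
move=> fF gF hF fg xf xg xh; apply/negPn/negP => /norP [hf hg].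
have := no_triple fF gF hF fg; rewrite eq_sym hf eq_sym hg => /(_ isT isT).
by move/setP/(_ x); rewrite !inE xf xg xh.
Qed.

(* Sending each other facet h to its meeting point with f is injective
   (x0 is only a default value). *)
Lemma meet_injection f (x0 : 'I_n) : f \in F ->
  exists pt : {set 'I_n} -> 'I_n,
    {in F :\ f, forall h, pt h \in h :&: f} /\ {in F :\ f &, injective pt}.
Proof.
move=> fF; pose pt h := odflt x0 [pick x in h :&: f].
have pt_meet : {in F :\ f, forall h, pt h \in h :&: f}.
  move=> h; rewrite !inE => /andP [hf hF]; rewrite /pt; case: pickP => [x /= |none].
    by rewrite inE.
  have := meet1 hF fF hf; rewrite (_ : h :&: f = set0) ?cards0 //.
  by apply/setP => x; rewrite in_set0; exact: none.
exists pt; split => // h1 h2 h1F h2F eq_pt; apply/eqP/negPn/negP => h12.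
have := pt_meet _ h1F; have := pt_meet _ h2F; rewrite -eq_pt.
move: h1F h2F; rewrite !inE => /andP [h1f h1F] /andP [h2f h2F] /andP [x2 _] /andP [x1 xf].
by have := at_most_two h1F h2F fF h12 x1 x2 xf; rewrite eq_sym (negbTE h1f) eq_sym (negbTE h2f).
Qed.

Lemma shared_vertex f v : m < #|F| -> f \in F -> v \in f ->
  exists2 g, g \in F :\ f & v \in g.
Proof.
move=> m_lt fF vf; have [pt [pt_meet pt_inj]] := meet_injection v fF.
have sub : pt @: (F :\ f) \subset f.
  by apply/subsetP => _ /imsetP [h hF ->]; have := pt_meet h hF; rewrite inE => /andP [].
have : pt @: (F :\ f) == f.
  rewrite eqEcard sub card_in_imset // card_facet //.
  by move: m_lt; rewrite (cardsD1 f F) fF add1n ltnS.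
move/eqP => imE; have : v \in pt @: (F :\ f) by rewrite imE.
case/imsetP => g gF ->; exists g => //.
by have := pt_meet g gF; rewrite inE => /andP [].
Qed.

Lemma private_vertex f : #|F| <= m -> f \in F ->
  exists2 p, p \in f & forall h, h \in F -> p \in h -> h = f.
Proof.
move=> F_le fF; have [x0 x0f] : exists x0, x0 \in f.
  apply/set0Pn; rewrite -card_gt0 card_facet //.
  by apply: leq_trans F_le; rewrite card_gt0; apply/set0Pn; exists f.
have [pt [pt_meet pt_inj]] := meet_injection x0 fF.
have [p pf p_out] : exists2 p, p \in f & p \notin pt @: (F :\ f).
  apply/subsetPn; apply/negP => /subset_leq_card.
  rewrite card_in_imset // card_facet //; move: F_le; rewrite (cardsD1 f F) fF add1n.
  by move=> lt le; have := leq_trans lt le; rewrite ltnn.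
exists p => // h hF ph; apply/eqP/negPn/negP => hf; move/negP: p_out; apply.
have hF' : h \in F :\ f by rewrite !inE hf.
apply/imsetP; exists h => //; have := pt_meet h hF'; rewrite inE => /andP [x_h x_f].
exact: (meet_uniq hF fF hf).
Qed.

(* Exchanging one vertex of a facet never yields a facet, as the result
   would meet the original facet in m-1 >= 2 vertices. *)
Lemma no_exchange f a b : 3 <= m -> f \in F -> a \in f -> b \notin f ->
  b |: (f :\ a) \notin F.
Proof.
move=> m_ge3 fF af bf; apply/negP => hF; set h := b |: (f :\ a) in hF.
have hf : h != f by apply/negP => /eqP hE; move: bf; rewrite -hE setU11.
have : f :\ a \subset h :&: f.
  by apply/subsetP => x; rewrite !inE => /andP [-> ->]; rewrite orbT.
move/subset_leq_card; rewrite (meet1 hF fF hf).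
by move: (cardsD1 a f); rewrite af card_facet // add1n; lia.
Qed.

(* In a closed labeling, distinct facets never share their i-th vertex:
   otherwise exchanging a vertex of f for one of g \ f would give a facet. *)
Lemma closed_distinct_kth (s : {perm 'I_n}) f g i : 3 <= m ->
  closed_wrt (relabel s F) m -> f \in F -> g \in F -> f != g -> i < m ->
  kth [set s x | x in f] i != kth [set s x | x in g] i.
Proof.
move=> m_ge3 cl fF gF fg i_lt; apply/eqP => eq_kth.
have [a af] : exists a, a \in f.
  by apply/set0Pn; rewrite -card_gt0 card_facet //; exact: leq_ltn_trans m_ge3.
have [b bg bf] : exists2 b, b \in g & b \notin f.
  have : 0 < #|g :\: f|.
    move: (cardsID f g); rewrite setIC (meet1 fF gF fg) (card_facet gF) add1n => e.
    by move: m_ge3; rewrite -e ltnS => /ltnW.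
  by rewrite card_gt0 => /set0Pn [b]; rewrite !inE => /andP [? ?]; exists b.
have card_h : #|b |: (f :\ a)| = m.
  rewrite cardsU1 !inE (negbTE bf) andbF add1n.
  by move: (cardsD1 a f); rewrite af card_facet // add1n => ->.
have sub_h : b |: (f :\ a) \subset f :|: g.
  by apply/subsetP => x; rewrite !inE => /orP [/eqP -> | /andP [_ ->]] //; rewrite bg orbT.
have := no_exchange m_ge3 fF af bf; rewrite -(mem_relabel s) => /negP; apply.
apply: (cl _ _ _ _ (ex_intro _ i (conj i_lt eq_kth))); rewrite ?mem_relabel //.
  by rewrite -imsetU imsetS.
by rewrite card_imset //; exact: perm_inj.
Qed.

(* Closed labelings force at most m facets: with more, the smallest vertex is
   shared by two facets, which then share their first vertex. *)
Lemma card_le_of_closed (s : {perm 'I_n}) : 3 <= m -> F != set0 ->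
  closed_wrt (relabel s F) m -> #|F| <= m.
Proof.
move=> m_ge3 F_neq0 cl; rewrite leqNgt; apply/negP => m_lt.
have [f0 f0F] := set0Pn _ F_neq0.
have [x0 x0f0] : exists x0, x0 \in f0.
  by apply/set0Pn; rewrite -card_gt0 card_facet //; exact: leq_ltn_trans m_ge3.
have x0U : x0 \in \bigcup_(h in F) h by apply/bigcupP; exists f0.
have [u uU u_min] := @arg_minnP _ x0 (mem (\bigcup_(h in F) h)) (fun x => val (s x)) x0U.
have [f fF uf] := bigcupP uU; have [g gfF ug] := shared_vertex m_lt fF uf.
have [gf gF] : g != f /\ g \in F by move: gfF; rewrite !inE => /andP [].
have first_u h : h \in F -> u \in h -> kth [set s x | x in h] 0 = val (s u).
  move=> hF uh; rewrite -(kth_rank (imset_f s uh)); congr kth; apply/eqP.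
  rewrite eq_sym /rank_by cards_eq0; apply/eqP/setP => y; rewrite !inE; apply/negbTE.
  apply/andP => -[/imsetP [w wh ->]]; rewrite ltnNge u_min //.
  by apply/bigcupP; exists h.
have := closed_distinct_kth m_ge3 cl gF fF gf (leq_ltn_trans (leq0n 2) m_ge3).
by rewrite (first_u f fF uf) (first_u g gF ug) eqxx.
Qed.

Definition prio (h : {set 'I_n}) : nat := enum_rank h.

Definition top (x : 'I_n) : nat := \max_(h in F | x \in h) prio h.

Definition shared (x : 'I_n) : bool :=
  [exists h in F, exists g in F, (h != g) && (x \in h) && (x \in g)].

(* The vertex order: by decreasing top, private vertices first; code breaks
   the remaining ties by the vertex label, making the order injective. *)
Definition key (x : 'I_n) : nat := 2 * (#|{set 'I_n}| - top x) + shared x.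

Definition code (x : 'I_n) : nat := key x * n + val x.

Lemma prio_inj : injective prio.
Proof. by move=> h1 h2 /val_inj /enum_rank_inj. Qed.

Lemma prio_lt h : prio h < #|{set 'I_n}|.
Proof. exact: ltn_ord. Qed.

Lemma top_ge h x : h \in F -> x \in h -> prio h <= top x.
Proof. by move=> hF xh; apply: leq_bigmax_cond; rewrite hF xh. Qed.

Lemma top_witness x b : 0 < b -> b <= top x ->
  exists2 h, h \in F & (x \in h) && (b <= prio h).
Proof.
move=> b_gt0 b_le.
case: (boolP [exists h in F, (x \in h) && (b <= prio h)]) => [/exists_inP [h] | none].
  by exists h.
suff : top x < b by rewrite ltnNge b_le.
rewrite -(prednK b_gt0) ltnS; apply/bigmax_leqP => h /andP [hF xh].
rewrite -ltnS prednK // ltnNge; apply: contra none => le_h.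
by apply/exists_inP; exists h; rewrite ?xh.
Qed.

Lemma key_meet f g v : f \in F -> g \in F -> f != g -> v \in f -> v \in g ->
  prio g < prio f -> key v = 2 * (#|{set 'I_n}| - prio f) + 1.
Proof.
move=> fF gF fg vf vg lt_gf; rewrite /key.
have -> : shared v by apply/exists_inP; exists f => //; apply/exists_inP; exists g; rewrite ?fg ?vf.
suff -> : top v = prio f by congr (_ + _).
apply/eqP; rewrite eqn_leq top_ge // andbT; apply/bigmax_leqP => h /andP [hF vh].
by case/orP: (at_most_two fF gF hF fg vf vg vh) => /eqP ->; [exact: leqnn | exact: ltnW].
Qed.

(* A private vertex of f precedes the vertices shared by f with
   lower-numbered facets. *)
Lemma key_private f p : f \in F -> p \in f -> (forall h, h \in F -> p \in h -> h = f) ->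
  key p = 2 * (#|{set 'I_n}| - prio f).
Proof.
move=> fF pf p_priv; rewrite /key.
have -> : shared p = false.
  apply/negbTE/exists_inP => -[h hF /exists_inP [g gF /andP [/andP [hg ph] pg]]].
  by move: hg; rewrite (p_priv h hF ph) (p_priv g gF pg) eqxx.
suff -> : top p = prio f by exact: addn0.
apply/eqP; rewrite eqn_leq top_ge // andbT; apply/bigmax_leqP => h /andP [hF ph].
by rewrite (p_priv h) //; exact: leqnn.
Qed.

Lemma code_inj : injective code.
Proof.
move=> x y eq_code; apply: ord_inj; move: (congr1 (modn^~ n) eq_code).
by rewrite /code !modnMDl !modn_small ?ltn_ord.
Qed.

Lemma code_lt w v : key w < key v -> code w < code v.
Proof.
rewrite /code => lt_key; apply: (@leq_trans ((key w).+1 * n)).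
  by rewrite mulSnr ltn_add2l ltn_ord.
by rewrite (leq_trans _ (leq_addr _ _)) // leq_mul2r lt_key orbT.
Qed.

Lemma code_le w v : code w < code v -> key w <= key v.
Proof.
move=> lt_code; rewrite leqNgt; apply: contraTN lt_code => /code_lt /ltnW.
by rewrite leqNgt.
Qed.

Lemma top_of_key w b : key w <= 2 * (#|{set 'I_n}| - prio b) + 1 -> prio b <= top w.
Proof.
rewrite /key; move: (prio_lt b) => /=.
move: (top w) (prio b) (#|{set 'I_n}|) (shared w) => t p N [] /=; lia.
Qed.

Lemma key_of_top w b h : h \in F -> w \in h -> prio b < prio h ->
  key w < 2 * (#|{set 'I_n}| - prio b) + 1.
Proof.
move=> hF wh; have := top_ge hF wh; have := prio_lt h; rewrite /key.
move: (top w) (prio b) (prio h) (#|{set 'I_n}|) (shared w) => t p q N [] /=; lia.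
Qed.

(* In the lower-numbered facet g, every vertex below the common vertex v of
   f and g is the meeting point of g with a facet numbered above f. *)
Lemma rank_low_le f g v : f \in F -> g \in F -> v \in f -> v \in g -> prio g < prio f ->
  rank_by code g v <= #|[set h in F | prio f < prio h]|.
Proof.
move=> fF gF vf vg lt_gf; set H := [set h in F | prio f < prio h].
have fg : f != g by apply: contraTneq lt_gf => ->; rewrite ltnn.
have [pt [pt_meet _]] := meet_injection v gF.
apply: leq_trans (leq_imset_card pt H); apply: subset_leq_card.
apply/subsetP => w; rewrite inE => /andP [wg lt_wv].
have key_w : key w <= 2 * (#|{set 'I_n}| - prio f) + 1.
  by rewrite -(key_meet fF gF fg vf vg lt_gf); exact: code_le.
have [h hF /andP [wh le_fh]] := top_witness (leq_ltn_trans (leq0n _) lt_gf) (top_of_key key_w).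
have hf : h != f.
  apply: contraTneq lt_wv => ehf; move: wh; rewrite ehf => wf.
  by rewrite (meet_uniq fF gF fg wf wg vf vg) ltnn.
have hg : h != g.
  by apply: contraTneq le_fh => ->; rewrite -ltnNge.
have hH : h \in H by rewrite inE hF ltn_neqAle le_fh andbT (inj_eq prio_inj) eq_sym.
apply/imsetP; exists h => //.
have /setIP [pth ptg] : pt h \in h :&: g by apply: pt_meet; rewrite !inE hg hF.
exact: (meet_uniq hF gF hg wh wg pth ptg).
Qed.

(* In f, the meeting points with the facets numbered above f and a private
   vertex all lie below v. *)
Lemma rank_high_gt f g v : #|F| <= m -> f \in F -> g \in F -> v \in f -> v \in g ->
  prio g < prio f -> #|[set h in F | prio f < prio h]| < rank_by code f v.
Proof.
move=> F_le fF gF vf vg lt_gf; set H := [set h in F | prio f < prio h].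
have fg : f != g by apply: contraTneq lt_gf => ->; rewrite ltnn.
have HfF : {subset H <= F :\ f}.
  move=> h; rewrite !inE => /andP [hF lt_fh]; rewrite hF andbT.
  by apply: contraTneq lt_fh => ->; rewrite ltnn.
have [p pf p_priv] := private_vertex F_le fF.
have [pt [pt_meet pt_inj]] := meet_injection v fF.
have key_v := key_meet fF gF fg vf vg lt_gf.
have p_out : p \notin pt @: H.
  apply/imsetP => -[h hH pE]; have := HfF h hH; rewrite !inE => /andP [hf hF].
  have /setIP [ph _] : p \in h :&: f by rewrite pE; apply: pt_meet; exact: HfF.
  by move: hf; rewrite (p_priv h hF ph) eqxx.
have below : p |: pt @: H \subset [set w in f | code w < code v].
  apply/subsetP => x; rewrite !inE => /orP [/eqP -> | /imsetP [h hH ->]].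
    by rewrite pf code_lt // key_v (key_private fF pf p_priv) addn1 ltnSn.
  have /setIP [pth ptf] : pt h \in h :&: f by apply: pt_meet; exact: HfF.
  move: hH; rewrite inE => /andP [hF lt_fh].
  by rewrite ptf code_lt // key_v (key_of_top hF pth lt_fh).
apply: leq_trans (subset_leq_card below).
by rewrite cardsU1 p_out card_in_imset // => h1 h2 /HfF h1F /HfF h2F; exact: pt_inj.
Qed.

Lemma rank_separation f g v : #|F| <= m -> f \in F -> g \in F -> f != g ->
  v \in f -> v \in g -> rank_by code f v != rank_by code g v.
Proof.
move=> F_le fF gF fg vf vg.
have rank_lt a b : a \in F -> b \in F -> v \in a -> v \in b -> prio b < prio a ->
    rank_by code b v < rank_by code a v.
  move=> aF bF va vb lt_ba.
  exact: leq_ltn_trans (rank_low_le aF bF va vb lt_ba) (rank_high_gt F_le aF bF va vb lt_ba).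
case: (ltngtP (prio g) (prio f)) => [lt_gf | lt_fg | /prio_inj efg].
- by rewrite eq_sym ltn_eqF // rank_lt.
- by rewrite ltn_eqF // rank_lt.
- by move: fg; rewrite efg eqxx.
Qed.

Lemma closed_of_card_le : #|F| <= m -> is_closed F m.
Proof.
move=> F_le; have [s sP] := perm_of_code code_inj.
exists s => _ _ /imsetP [f fF ->] /imsetP [g gF ->] [i [i_lt eq_kth]] h h_sub card_h.
have card_img k : k \in F -> #|[set s x | x in k]| = m.
  by move=> kF; rewrite card_imset ?card_facet //; exact: perm_inj.
case: (eqVneq f g) => [efg | fg].
  move: h_sub; rewrite -efg setUid => h_sub.
  have -> : h = [set s x | x in f].
    by apply/eqP; rewrite eqEcard h_sub (card_img f fF) card_h leqnn.
  by rewrite mem_relabel.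
have [x /setIP [xf xg] eq_rank] :
    exists2 x, x \in [set s x | x in f] :&: [set s x | x in g] &
      rank_by val [set s x | x in f] x = rank_by val [set s x | x in g] x.
  by apply: kth_common eq_kth; rewrite card_img.
move: xf xg eq_rank => /imsetP [v vf ->]; rewrite mem_imset; last exact: perm_inj.
move=> vg; rewrite !(rank_relabel _ _ sP) => eq_rank.
by move: (rank_separation F_le fF gF fg vf vg); rewrite eq_rank eqxx.
Qed.

End FacetsMeetingInOnePoint.

Lemma in_S_clique n m (F : {set {set 'I_n}}) (H : {set 'I_n}) :
  in_S F m H -> exists2 G, G \in cliques F m & H \subset G.
Proof.
move=> HS; have H_ok : in_S F m H && (H \subset H) by rewrite HS subxx.
have [G /andP [GS HG] G_max] :=
  @arg_maxnP _ H (fun G => in_S F m G && (H \subset G)) (fun G => #|G|) H_ok.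
exists G => //; rewrite inE GS; apply/forallP => K; apply/implyP => /andP [KS GK].
have := G_max K; rewrite KS (subset_trans HG GK) => /(_ isT) card_K.
by rewrite eq_sym eqEcard GK; exact: card_K.
Qed.

Lemma facet_in_S n m (F : {set {set 'I_n}}) f :
  pure_of_dim F m -> f \in F -> in_S F m f.
Proof.
case/andP=> _ /forall_inP card_F fF; rewrite /in_S (eqP (card_F f fF)) leqnn.
by apply/forallP => s; apply/implyP => /andP [sf _]; apply/exists_inP; exists f.
Qed.

Lemma cliques_facets n m (F : {set {set 'I_n}}) : pure_of_dim F m ->
  (forall G, G \in cliques F m -> #|G| = m) -> cliques F m = F.
Proof.
move=> pure card_cl; have /andP [_ /forall_inP card_F] := pure.
apply/setP => G; apply/idP/idP => [GC | GF].
  have /andP [_ /forallP /(_ G)] : in_S F m G by move: GC; rewrite inE => /andP [].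
  rewrite subxx card_cl // leqnn /is_face => /exists_inP [f fF Gf].
  have -> : G = f by apply/eqP; rewrite eqEcard Gf (eqP (card_F f fF)) card_cl // leqnn.
  exact: fF.
have [K KC GK] := in_S_clique (facet_in_S pure GF).
have -> : G = K by apply/eqP; rewrite eqEcard GK card_cl // (eqP (card_F G GF)) leqnn.
exact: KC.
Qed.

Theorem corollary3p5 (n m : nat) (F : {set {set 'I_n}}) :
  3 <= m ->
  pure_of_dim F m ->
  (* (i) *)
  (forall G1 G2, G1 \in cliques F m -> G2 \in cliques F m -> G1 != G2 ->
     #|G1 :&: G2| <= 1) ->
  (* (ii) *)
  (forall G1 G2 G3, G1 \in cliques F m -> G2 \in cliques F m ->
     G3 \in cliques F m -> G1 != G2 -> G1 != G3 -> G2 != G3 ->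
     G1 :&: G2 :&: G3 = set0) ->
  (* each clique is a single (m-1)-simplex *)
  (forall G, G \in cliques F m -> #|G| = m) ->
  (* G_Delta is the complete graph K_r *)
  (forall G1 G2, G1 \in cliques F m -> G2 \in cliques F m -> G1 != G2 ->
     G1 :&: G2 != set0) ->
  (is_closed F m <-> #|cliques F m| <= m).
Proof.
move=> m_ge3 pure meet_le1 no_triple card_cl meet_neq0.
rewrite (cliques_facets pure card_cl) in meet_le1 no_triple meet_neq0 *.
have /andP [F_neq0 /forall_inP card_F] := pure.
have card_facet f : f \in F -> #|f| = m by move=> fF; apply/eqP; exact: card_F.
have meet1 f g : f \in F -> g \in F -> f != g -> #|f :&: g| = 1.
  by move=> fF gF fg; apply/eqP; rewrite eqn_leq meet_le1 //= card_gt0 meet_neq0.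
split => [[s closed_s] | F_le].
  exact: card_le_of_closed card_facet meet1 no_triple _ m_ge3 F_neq0 closed_s.
exact: closed_of_card_le card_facet meet1 no_triple F_le.
Qed.
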